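(* Let $G$ be a residually finite locally nilpotent group containing an element with finite centralizer. Then $G$ is finite. *)

From Stdlib Require Import List.
Import ListNotations.

Record Group := {
  carrier :> Type;
  gmul : carrier -> carrier -> carrier;
  gone : carrier;
  ginv : carrier -> carrier;
  gmulA : forall x y z, gmul x (gmul y z) = gmul (gmul x y) z;
  gmul1l : forall x, gmul gone x = x;
  gmul1r : forall x, gmul x gone = x;
  gmulVl : forall x, gmul (ginv x) x = gone;
  gmulVr : forall x, gmul x (ginv x) = gone
}.

Section GroupDefs.
Variable G : Group.

Definition is_subgroup (H : G -> Prop) : Prop :=
  H (gone G) /\ (forall x y, H x -> H y -> H (gmul G x y)) /\
  (forall x, H x -> H (ginv G x)).

Definition is_normal (N : G -> Prop) : Prop :=
  is_subgroup N /\
  forall x g, N x -> N (gmul G (ginv G g) (gmul G x g)).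

Definition finite_index (N : G -> Prop) : Prop :=
  exists reps : list G, forall x, exists g, In g reps /\ N (gmul G (ginv G g) x).

Definition residually_finite : Prop :=
  forall g : G, g <> gone G ->
    exists N, is_normal N /\ finite_index N /\ ~ N g.

Inductive gen (S : G -> Prop) : G -> Prop :=
| gen_base x : S x -> gen S x
| gen_one : gen S (gone G)
| gen_mul x y : gen S x -> gen S y -> gen S (gmul G x y)
| gen_inv x : gen S x -> gen S (ginv G x).

Definition comm (a b : G) : G :=
  gmul G (ginv G a) (gmul G (ginv G b) (gmul G a b)).

(* lower central series of a subgroup H: gamma_1 = H (index 0),
   gamma_{i+1} = [gamma_i, H] *)
Fixpoint lcs (H : G -> Prop) (n : nat) : G -> Prop :=
  match n with
  | O => H
  | S m => gen (fun x => exists a b, lcs H m a /\ H b /\ x = comm a b)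
  end.

Definition nilpotent_subgroup (H : G -> Prop) : Prop :=
  exists n, forall x, lcs H n x -> x = gone G.

Definition locally_nilpotent : Prop :=
  forall l : list G, nilpotent_subgroup (gen (fun x => In x l)).

Definition centralizer (g : G) : G -> Prop :=
  fun x => gmul G x g = gmul G g x.

Definition finite_set (P : G -> Prop) : Prop :=
  exists l : list G, forall x, P x -> In x l.

Definition finite_group : Prop := exists l : list G, forall x : G, In x l.

End GroupDefs.

(* Take x with finite centralizer C(x). By residual finiteness there is a normal
   subgroup N of finite index meeting the finite set C(x) trivially. On N the map
   n |-> [n, x] is injective (if [n, x] = [k, x] then k n^-1 centralizes x) and
   fixes 1, while local nilpotence of <n, x> makes some iterate [n, x, ..., x]
   trivial; hence N = 1 and G is finite. *)

From Stdlib Require Import List Classical PeanoNat.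
Import ListNotations.

Lemma finite_choice (A B : Type) (P : A -> B -> Prop) (l : list A) :
  exists r : list B, forall a, In a l -> (exists b, P a b) -> exists b, In b r /\ P a b.
Proof.
  induction l as [|a l [r Hr]].
  - exists []. intros a' [].
  - destruct (classic (exists b, P a b)) as [[b Hb]|Hnone].
    + exists (b :: r). intros a' [<-|Ha'] Hex.
      * exists b. split; [left|]; auto.
      * destruct (Hr a' Ha' Hex) as [b' [Hb' Pb']]. exists b'. split; [right|]; auto.
    + exists r. intros a' [<-|Ha'] Hex; [contradiction | auto].
Qed.

Section GroupTheory.

Variable G : Group.
Notation "a * b" := (gmul G a b).
Notation "a ^-1" := (ginv G a) (at level 2).
Notation one := (gone G).

Lemma gmulKg a b : a^-1 * (a * b) = b.
Proof. rewrite gmulA, gmulVl, gmul1l; reflexivity. Qed.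

Lemma gmulVKg a b : a * (a^-1 * b) = b.
Proof. rewrite gmulA, gmulVr, gmul1l; reflexivity. Qed.

Lemma ginv_unique a b : a * b = one -> a = b^-1.
Proof. intro E. rewrite <- (gmul1r G a), <- (gmulVr G b), gmulA, E, gmul1l. reflexivity. Qed.

Lemma ginv1 : one^-1 = one.
Proof. symmetry. apply ginv_unique, gmul1l. Qed.

Lemma ginvK a : (a^-1)^-1 = a.
Proof. symmetry. apply ginv_unique, gmulVr. Qed.

Lemma ginvM a b : (a * b)^-1 = b^-1 * a^-1.
Proof.
  symmetry. apply ginv_unique.
  rewrite <- gmulA, gmulKg, gmulVl. reflexivity.
Qed.

Lemma eq_of_ginv_mul_eq1 a b : a^-1 * b = one -> b = a.
Proof. intro E. rewrite <- (gmulVKg a b), E, gmul1r. reflexivity. Qed.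

Lemma subgroup_meet H K : is_subgroup G H -> is_subgroup G K ->
  is_subgroup G (fun y => H y /\ K y).
Proof. intros (H1 & HM & HV) (K1 & KM & KV). repeat split; intuition. Qed.

Lemma normal_meet N M : is_normal G N -> is_normal G M ->
  is_normal G (fun y => N y /\ M y).
Proof.
  intros [HN CN] [HM CM]. split; [apply subgroup_meet; auto|].
  intros x g [Nx Mx]. auto.
Qed.

Lemma finite_index_meet H K : is_subgroup G H -> is_subgroup G K ->
  finite_index G H -> finite_index G K -> finite_index G (fun y => H y /\ K y).
Proof.
  intros (_ & HM & HV) (_ & KM & KV) [rH IH] [rK IK].
  (* one representative for each realised pair (gH, hK) of cosets *)
  destruct (finite_choice (G * G)%type G
     (fun p y => H ((fst p)^-1 * y) /\ K ((snd p)^-1 * y)) (list_prod rH rK)) as [r Hr].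
  exists r. intro x.
  destruct (IH x) as [g [Ig Hg]]. destruct (IK x) as [h [Ih Kh]].
  destruct (Hr (g, h)) as [y [Iy [Hy Ky]]]; [apply in_prod; auto | exists x; auto |].
  simpl in Hy, Ky. exists y. split; [exact Iy|].
  assert (E : forall c, y^-1 * x = (c^-1 * y)^-1 * (c^-1 * x)).
  { intro c. rewrite ginvM, ginvK, <- gmulA, gmulVKg. reflexivity. }
  split; [rewrite (E g) | rewrite (E h)]; auto.
Qed.

Lemma residually_finite_separates (L : list G) : residually_finite G ->
  exists N, is_normal G N /\ finite_index G N /\ forall c, In c L -> N c -> c = one.
Proof.
  intro RF. induction L as [|c L (N & NN & FN & SN)].
  - exists (fun _ => True). repeat split; auto.
    + exists [one]. intro x. exists one. split; [left|]; auto.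
    + intros c [].
  - destruct (classic (c = one)) as [->|Hc].
    + exists N. split; [exact NN | split; [exact FN |]].
      intros c' [<-|Ic'] Nc'; auto.
    + destruct (RF c Hc) as (M & NM & FM & Mc).
      exists (fun y => N y /\ M y). split; [apply normal_meet; auto|].
      split; [apply finite_index_meet; [exact (proj1 NN) | exact (proj1 NM) | exact FN | exact FM]|].
      intros c' [<-|Ic'] [Nc' Mc']; [contradiction | auto].
Qed.

Lemma finite_of_trivial_finite_index N : finite_index G N ->
  (forall n, N n -> n = one) -> finite_group G.
Proof.
  intros [reps Hreps] Ntriv. exists reps. intro y.
  destruct (Hreps y) as [g [Ig Ng]].
  rewrite (eq_of_ginv_mul_eq1 g y (Ntriv _ Ng)). exact Ig.
Qed.

Lemma comm1g x : comm G one x = one.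
Proof. unfold comm. rewrite gmul1l, ginv1, gmul1l, gmulVl. reflexivity. Qed.

Lemma normal_comm N n x : is_normal G N -> N n -> N (comm G n x).
Proof. intros [(_ & NM & NV) NC] Nn. unfold comm. auto. Qed.

Lemma comm_eq_centralizer n k x : comm G n x = comm G k x ->
  centralizer G x (k * n^-1).
Proof.
  unfold comm, centralizer. intro E.
  (* multiply [n^-1 x^-1 n x = k^-1 x^-1 k x] by [x k] on the left and [x^-1 n^-1 x] on the right *)
  apply (f_equal (fun z => x * (k * (z * (x^-1 * (n^-1 * x)))))) in E.
  rewrite <- !gmulA in E.
  rewrite !gmulVKg, gmulVl, gmul1r in E.
  rewrite <- !gmulA. symmetry. exact E.
Qed.

Definition iter_comm (x : G) (k : nat) (n : G) : G :=
  Nat.iter k (fun y => comm G y x) n.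

Lemma iter_comm_lcs H n x k : H n -> H x -> lcs G H k (iter_comm x k n).
Proof.
  intros Hn Hx. induction k as [|k IH]; [exact Hn|].
  apply gen_base. exists (iter_comm x k n), x. auto.
Qed.

Lemma locally_nilpotent_engel : locally_nilpotent G ->
  forall n x, exists k, iter_comm x k n = one.
Proof.
  intros LN n x. destruct (LN [n; x]) as [k Hk]. exists k.
  apply Hk, iter_comm_lcs; apply gen_base; simpl; auto.
Qed.

Lemma comm_inj_normal N x a b : is_normal G N ->
  (forall c, N c -> centralizer G x c -> c = one) ->
  N a -> N b -> comm G a x = comm G b x -> a = b.
Proof.
  intros NN CN Na Nb E.
  assert (Eba : b * a^-1 = one).
  { apply CN; [apply NN; [exact Nb | apply NN, Na] | apply comm_eq_centralizer, E]. }
  rewrite (ginv_unique _ _ Eba), ginvK. reflexivity.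
Qed.

Lemma iter_comm_eq1_normal N x k n : is_normal G N ->
  (forall c, N c -> centralizer G x c -> c = one) ->
  N n -> iter_comm x k n = one -> n = one.
Proof.
  intros NN CN. revert n. induction k as [|k IH]; intros n Nn Hk; [exact Hk|].
  apply (comm_inj_normal N x); [exact NN | exact CN | exact Nn | apply NN |].
  rewrite comm1g. apply IH; [apply normal_comm; auto |].
  unfold iter_comm in Hk. rewrite Nat.iter_succ_r in Hk. exact Hk.
Qed.

End GroupTheory.

Theorem lemma2p4 (G : Group) :
  residually_finite G -> locally_nilpotent G ->
  (exists g : G, finite_set G (centralizer G g)) ->
  finite_group G.
Proof.
  intros RF LN [x [l Cl]].
  destruct (residually_finite_separates G l RF) as (N & NN & FN & SN).
  apply (finite_of_trivial_finite_index G N FN). intros n Nn.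
  destruct (locally_nilpotent_engel G LN n x) as [k Hk].
  apply (iter_comm_eq1_normal G N x k n NN); [| exact Nn | exact Hk].
  intros c Nc Cc. exact (SN c (Cl c Cc) Nc).
Qed.
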